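(* Let $F\dashv G$ be a Galois connection between lattices $\mathcal{L}$ and $\mathcal{L}'$, and let $p:\mathcal{P}(I\times\mathcal{L})\to\mathcal{P}(O\times\mathcal{L})$ be a (partial) program. Then $\mathrm{MEF}^{F\dashv G}[p]$ is noninterfering.
   Context: A lattice means a partially ordered set $(\mathcal{L},\sqsubseteq)$ with least element $\bot$ in which any two elements have a least upper bound $\sqcup$; $\bigsqcup S$ denotes the least upper bound of a finite set ($\bigsqcup\emptyset=\bot$). A Galois connection $F\dashv G$ between $\mathcal{L}$ and $\mathcal{L}'$ is a pair $F:\mathcal{L}\to\mathcal{L}'$, $G:\mathcal{L}'\to\mathcal{L}$ with $F(\ell)\sqsubseteq_{\mathcal{L}'}\jmath\iff\ell\sqsubseteq_{\mathcal{L}}G(\jmath)$. For a function $H$ and set $S$, $H^*(S)=\{H(s):s\in S\}$. Labeled sets are finite subsets of $V\times\mathcal{L}$; write $a^\ell$ for $(a,\ell)$. For a labeled set $x$: $\mathcal{L}(x)=\{\ell : a^\ell\in x\}$; $x\downarrow\ell=\{a^\jmath\in x : \jmath\sqsubseteq\ell\}$; $x\sim_\ell y$ iff $x\downarrow\ell=y\downarrow\ell$; for $L\subseteq\mathcal{L}$, $x@L=\{a^\ell\in x : \ell\in L\}$. The closure set of finite $S$ is $C(S)=\{\bigsqcup S' : S'\subseteq S\}$ (computed in whichever lattice $S$ lives in); the up-set is $\ell\uparrow S=\{\jmath\in\mathcal{L} : \ell\sqsubseteq\jmath \text{ and } \forall\iota\in S.\ \iota\sqsubseteq\jmath\Rightarrow\iota\sqsubseteq\ell\}$.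 Define $C_{F\dashv G}(S)=G^*(C(F^*(S)))$ and $\mathrm{MEF}^{F\dashv G}[p](x)=\bigcup\{p(x\downarrow\ell)@(\ell\uparrow C_{F\dashv G}(\mathcal{L}(x))) : \ell\in C_{F\dashv G}(\mathcal{L}(x))\}$. A (partial) program $q:\mathcal{P}(I\times\mathcal{L})\to\mathcal{P}(O\times\mathcal{L})$ is noninterfering if for all $\ell\in\mathcal{L}$ and all $x,y$ with $x\sim_\ell y$ such that $q(x)$ and $q(y)$ are both defined, $q(x)\sim_\ell q(y)$. *)

From HB Require Import structures.
From mathcomp Require Import all_boot all_order.
From mathcomp Require Import finmap.

Set Implicit Arguments.
Unset Strict Implicit.
Unset Printing Implicit Defensive.

Import Order.Theory.
Local Open Scope order_scope.
Local Open Scope fset_scope.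

(* A "lattice" in the sense of the paper: a partial order with least element
   and binary least upper bounds, i.e. a bJoinSemilatticeType. *)

Section Defs.

Definition galois_conn {d d' : Order.disp_t}
  {L : bJoinSemilatticeType d} {L' : bJoinSemilatticeType d'}
  (F : L -> L') (G : L' -> L) : Prop :=
  forall (l : L) (j : L'), (F l <= j) = (l <= G j).

Definition lub {d} {L : bJoinSemilatticeType d} (S : {fset L}) : L :=
  \big[Order.join/Order.bottom]_(j <- S) j.

Definition labels {V : choiceType} {d} {L : bJoinSemilatticeType d}
  (x : {fset V * L}) : {fset L} := [fset a.2 | a in x].

Definition down {V : choiceType} {d} {L : bJoinSemilatticeType d}
  (x : {fset V * L}) (l : L) : {fset V * L} := [fset a in x | a.2 <= l].

Definition low_eq {V : choiceType} {d} {L : bJoinSemilatticeType d}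
  (l : L) (x y : {fset V * L}) : Prop := down x l = down y l.

Definition at_labels {V : choiceType} {d} {L : bJoinSemilatticeType d}
  (x : {fset V * L}) (P : pred L) : {fset V * L} := [fset a in x | P a.2].

Definition closure {d} {L : bJoinSemilatticeType d} (S : {fset L}) : {fset L} :=
  [fset lub S' | S' in fpowerset S].

Definition upset {d} {L : bJoinSemilatticeType d} (l : L) (S : {fset L}) : pred L :=
  fun j => (l <= j) && all (fun i => (i <= j) ==> (i <= l)) S.

Definition closureFG {d d'} {L : bJoinSemilatticeType d} {L' : bJoinSemilatticeType d'}
  (F : L -> L') (G : L' -> L) (S : {fset L}) : {fset L} :=
  [fset G j | j in closure [fset F l | l in S]].

Definition program (I O : choiceType) {d} (L : bJoinSemilatticeType d) :=
  {fset I * L} -> option {fset O * L}.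

(* MEF^{F -| G}[p](x): defined iff every p(x ↓ ℓ), ℓ in C_{F-|G}(L(x)), is defined. *)
Definition MEF {I O : choiceType} {d d'} {L : bJoinSemilatticeType d}
  {L' : bJoinSemilatticeType d'} (F : L -> L') (G : L' -> L)
  (p : program I O L) : program I O L :=
  fun x =>
    let C := closureFG F G (labels x) in
    if all (fun l => p (down x l) : bool) C then
      Some (\bigcup_(l <- C) at_labels (odflt fset0 (p (down x l))) (upset l C))
    else None.

Definition noninterfering {I O : choiceType} {d} {L : bJoinSemilatticeType d}
  (q : program I O L) : Prop :=
  forall (l : L) (x y : {fset I * L}) (qx qy : {fset O * L}),
    low_eq l x y -> q x = Some qx -> q y = Some qy -> low_eq l qx qy.

End Defs.

From HB Require Import structures.
From mathcomp Require Import all_boot all_order.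
From mathcomp Require Import finmap.

(* An output a^j of MEF^{F -| G}[p](x) with j <= l comes from a run p(x ↓ k)
   at a level k <= j of C_{F -| G}(L(x)), filtered by the up-set of k, which
   only inspects the elements of C_{F -| G}(L(x)) below j.  All of these are
   determined by x ↓ l: if G(⊔ S') <= l with S' ⊆ F*(L(x)), then every label s
   with F s ∈ S' satisfies s <= l by adjunction, so the same closure element is
   already generated by L(x ↓ l). *)

Set Implicit Arguments.
Unset Strict Implicit.
Unset Printing Implicit Defensive.

Import Order.Theory.
Local Open Scope order_scope.
Local Open Scope fset_scope.

Lemma imfsetS (K V : choiceType) (f : K -> V) (A B : {fset K}) :
  A `<=` B -> f @` A `<=` f @` B.
Proof. by move=> /fsubsetP AB; apply: subset_imfset. Qed.

Section LabeledSets.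

Variables (V : choiceType) (d : Order.disp_t) (L : bJoinSemilatticeType d).
Implicit Types (x y : {fset V * L}) (k l : L).

Lemma labels_down x l : labels (down x l) = [fset s in labels x | s <= l].
Proof.
apply/fsetP => s; rewrite inE; apply/imfsetP/andP => [[a] | [/imfsetP[a ax ->] al]].
  by rewrite inE => /andP[ax al] ->; split=> //; apply/imfsetP; exists a.
by exists a => //; rewrite inE; apply/andP.
Qed.

Lemma down_down x k l : k <= l -> down (down x l) k = down x k.
Proof.
move=> kl; apply/fsetP => a; rewrite !inE -andbA.
by case: (boolP (a.2 <= k)) => [ak | _]; rewrite ?andbF // (le_trans ak kl).
Qed.

Lemma low_eq_le x y k l : low_eq l x y -> k <= l -> low_eq k x y.
Proof. by move=> xy kl; rewrite /low_eq -(down_down x kl) -(down_down y kl) xy. Qed.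

End LabeledSets.

Lemma upset_eq d (L : bJoinSemilatticeType d) (C C' : {fset L}) k j :
  (forall i, i <= j -> (i \in C) = (i \in C')) -> upset k C j = upset k C' j.
Proof.
move=> CC'; rewrite /upset; congr (_ && _).
apply/allP/allP => up i iC; apply/implyP => ij.
  by apply: (implyP (up i _)) => //; rewrite CC'.
by apply: (implyP (up i _)) => //; rewrite -CC'.
Qed.

Section GaloisClosure.

Variables (d d' : Order.disp_t).
Variables (L : bJoinSemilatticeType d) (L' : bJoinSemilatticeType d').
Variables (F : L -> L') (G : L' -> L).

Lemma closureFG_mono (S1 S2 : {fset L}) :
  S1 `<=` S2 -> closureFG F G S1 `<=` closureFG F G S2.
Proof. by move=> S12; apply/imfsetS/imfsetS; rewrite fpowersetS; apply/imfsetS. Qed.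

Hypothesis gc : galois_conn F G.

Lemma closureFG_restrict (S : {fset L}) k l :
  k \in closureFG F G S -> k <= l -> k \in closureFG F G [fset s in S | s <= l].
Proof.
case/imfsetP => j /imfsetP[S' /=]; rewrite fpowersetE => /fsubsetP S'S -> -> kl.
apply/imfsetP; exists (lub S') => //; apply/imfsetP; exists S' => //=.
rewrite fpowersetE; apply/fsubsetP => t tS'; have /imfsetP[s sS Et] := S'S t tS'.
apply/imfsetP; exists s => //=; rewrite inE; apply/andP; split => //.
by apply: le_trans kl; rewrite -gc -Et; apply: (joins_sup_seq (P := predT)).
Qed.

Lemma mem_closureFG_down (V : choiceType) (x : {fset V * L}) k l : k <= l ->
  (k \in closureFG F G (labels x)) = (k \in closureFG F G (labels (down x l))).
Proof.
move=> kl; rewrite labels_down; apply/idP/idP => [kC | ].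
  exact: closureFG_restrict kC kl.
by apply/fsubsetP/closureFG_mono; apply/fsubsetP => s; rewrite inE => /andP[].
Qed.

Lemma closureFG_low_eq (V : choiceType) (x y : {fset V * L}) k l :
  low_eq l x y -> k <= l ->
  (k \in closureFG F G (labels x)) = (k \in closureFG F G (labels y)).
Proof.
by move=> xy kl; rewrite (mem_closureFG_down x kl) (mem_closureFG_down y kl) xy.
Qed.

Lemma MEF_low_sub (I O : choiceType) (p : program I O L) l x y qx qy a :
  low_eq l x y -> MEF F G p x = Some qx -> MEF F G p y = Some qy ->
  a.2 <= l -> a \in qx -> a \in qy.
Proof.
rewrite /MEF => xy; case: ifP => // _ [<-]; case: ifP => // _ [<-] al.
case/bigfcupP => k /andP[kCx _]; rewrite inE => /andP[a_pk up_k].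
have kl : k <= l by apply: le_trans al; case/andP: up_k.
apply/bigfcupP; exists k; first by rewrite andbT -(closureFG_low_eq xy kl).
rewrite inE -(low_eq_le xy kl); apply/andP; split=> //; move: up_k.
by rewrite (upset_eq _ (C' := closureFG F G (labels y))) // => i ia;
  apply: closureFG_low_eq xy (le_trans ia al).
Qed.

End GaloisClosure.

Theorem mainTheorem9 (d d' : Order.disp_t)
  (L : bJoinSemilatticeType d) (L' : bJoinSemilatticeType d')
  (F : L -> L') (G : L' -> L) (I O : choiceType) (p : program I O L) :
  galois_conn F G -> noninterfering (MEF F G p).
Proof.
move=> gc l x y qx qy xy hx hy; apply/fsetP => a; rewrite !inE.
case: (boolP (a.2 <= l)) => al; rewrite ?andbF ?andbT //.
by apply/idP/idP; [exact: MEF_low_sub hx hy al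
                 | exact: MEF_low_sub (esym xy) hy hx al].
Qed.
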